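(* Every free completely simple semigroup $S=F_{css}(X)$ of finite rank $n\ge 2$ is an equational domain in the language $\mathcal{L}_S$.
   Context: Completely simple semigroups are considered as algebras in the language $\{\cdot,{}^{-1}\}$, where they form a variety (defined by $xx^{-1}x=x$, $xx^{-1}=x^{-1}x$, $(x^{-1})^{-1}=x$, $(xyx)^{-1}(xyx)=x^{-1}x$ together with associativity); $F_{css}(X)$ is the free algebra of this variety on the set $X$, $|X|=n$. The language $\mathcal{L}_S$ is $\{\cdot,{}^{-1}\}$ plus a constant for each element of $S$. An equation is an equality of two $\mathcal{L}_S$-terms; an algebraic set is the solution set in $S^m$ of a system of equations; $S$ is an equational domain if every finite union of algebraic sets is algebraic. *)

From mathcomp Require Import all_boot.
Set Implicit Arguments. Unset Strict Implicit. Unset Printing Implicit Defensive.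

Inductive css_term (V : Type) : Type :=
  | Var of V
  | Mul of css_term V & css_term V
  | Inv of css_term V.
Arguments Var {V}. Arguments Mul {V}. Arguments Inv {V}.

(* Terms modulo this
   relation form the free algebra F_css(V). *)
Inductive css_eq {V : Type} : css_term V -> css_term V -> Prop :=
  | css_refl t : css_eq t t
  | css_sym s t : css_eq s t -> css_eq t s
  | css_trans s t u : css_eq s t -> css_eq t u -> css_eq s u
  | css_cong_mul s s' t t' : css_eq s s' -> css_eq t t' -> css_eq (Mul s t) (Mul s' t')
  | css_cong_inv s s' : css_eq s s' -> css_eq (Inv s) (Inv s')
  | css_assoc x y z : css_eq (Mul (Mul x y) z) (Mul x (Mul y z))
  | css_ax1 x : css_eq (Mul (Mul x (Inv x)) x) x
  | css_ax2 x : css_eq (Mul x (Inv x)) (Mul (Inv x) x)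
  | css_ax3 x : css_eq (Inv (Inv x)) x
  | css_ax4 x y : css_eq (Mul (Inv (Mul (Mul x y) x)) (Mul (Mul x y) x)) (Mul (Inv x) x).

(* Elements of the free completely simple semigroup F_css(X), |X| = n,
   are represented by terms over 'I_n; equality in F_css is css_eq. *)
Definition Fcss (n : nat) := css_term 'I_n.

Fixpoint css_subst {V W : Type} (f : V -> css_term W) (t : css_term V) : css_term W :=
  match t with
  | Var v => f v
  | Mul a b => Mul (css_subst f a) (css_subst f b)
  | Inv a => Inv (css_subst f a)
  end.

(* L_S-terms in m variables, S = F_css(X): variables inl i (i < m) and a
   constant inr c for each element c of S. *)
Definition LS_term (n m : nat) := css_term ('I_m + Fcss n).

Definition equation (n m : nat) := (LS_term n m * LS_term n m)%type.
Definition system (n m : nat) := equation n m -> Prop.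

Definition LS_eval (n m : nat) (p : 'I_m -> Fcss n) (t : LS_term n m) : Fcss n :=
  css_subst (fun v => match v with inl i => p i | inr c => c end) t.

Definition solution (n m : nat) (E : system n m) (p : 'I_m -> Fcss n) : Prop :=
  forall e, E e -> css_eq (LS_eval p e.1) (LS_eval p e.2).

Definition algebraic (n m : nat) (A : ('I_m -> Fcss n) -> Prop) : Prop :=
  exists E : system n m, forall p, A p <-> solution E p.

Definition equational_domain (n : nat) : Prop :=
  forall (m k : nat) (Es : 'I_k -> system n m),
    algebraic (fun p => exists j : 'I_k, solution (Es j) p).

(* F_css(X) is realised as the Rees matrix semigroup over the free group on
   letters x_i and p_li (l, i <> 0), with sandwich matrix (p_li) (trivial in row
   and column 0) and generators (i, x_i, i).  Sending (i, g, l) to D_i g C_l,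
   for arbitrary images of the x_i in a completely simple semigroup, shows that
   this model is free, so equality in F_css is equality of interpretations.
   The H-class of e = x_0 x_0^-1 is the free group, and three maps
   pi_k(x) = L_k x R_k with constants L_k, R_k land in it and separate points.
   Given equations a = b and c = d, let X = pi_k(a) pi_k(b)^-1 and
   Z = g pi_l(c) pi_l(d)^-1 g^-1 for a constant g.  If a = b or c = d then
   XZ = ZX; otherwise suitable k, l and a letter g cancelling with neither X
   nor pi_l(c) pi_l(d)^-1 make XZ and ZX distinct reduced words.  Hence all the
   equations XZ = ZX together define the union of the two solution sets, and
   x_0 = x_1 defines the empty set. *)

From mathcomp Require Import all_boot.
From Stdlib Require Import ClassicalEpsilon FunctionalExtensionality PropExtensionality.
From Stdlib Require Import ProofIrrelevance Classical.
Set Implicit Arguments. Unset Strict Implicit. Unset Printing Implicit Defensive.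

Record css := Css {
  css_sort :> Type;
  cmul : css_sort -> css_sort -> css_sort;
  cinv : css_sort -> css_sort;
  cmulA : forall x y z, cmul (cmul x y) z = cmul x (cmul y z);
  cmulVK : forall x, cmul (cmul x (cinv x)) x = x;
  cmulVC : forall x, cmul x (cinv x) = cmul (cinv x) x;
  cinvK : forall x, cinv (cinv x) = x;
  cinv_sandwich : forall x y,
    cmul (cinv (cmul (cmul x y) x)) (cmul (cmul x y) x) = cmul (cinv x) x }.
Arguments cmul {c}. Arguments cinv {c}.
Local Notation "x ** y" := (cmul x y) (at level 40, left associativity).

Fixpoint eval (S : css) (V : Type) (v : V -> S) (t : css_term V) : S :=
  match t with
  | Var x => v x
  | Mul a b => eval v a ** eval v b
  | Inv a => cinv (eval v a)
  end.

Lemma eval_css_eq (S : css) (V : Type) (v : V -> S) (s t : css_term V) :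
  css_eq s t -> eval v s = eval v t.
Proof.
elim=> //= *; try congruence.
- exact: cmulA.
- exact: cmulVK.
- exact: cmulVC.
- exact: cinvK.
- exact: cinv_sandwich.
Qed.

Section CssTheory.
Variable S : css.
Implicit Types x y z w e h : S.

Lemma cinv_mulVK x : cinv x ** x ** cinv x = cinv x.
Proof. by have := cmulVK (cinv x); rewrite cinvK. Qed.

Lemma cmul_mulV x : x ** (x ** cinv x) = x.
Proof. by rewrite cmulVC -cmulA cmulVK. Qed.

Lemma idem_mulV x : x ** cinv x ** (x ** cinv x) = x ** cinv x.
Proof. by rewrite -cmulA cmulVK. Qed.

Lemma cinv_unique z w : z ** w ** z = z -> w ** z ** w = w -> z ** w = w ** z ->
  w = cinv z.
Proof.
move=> zwz wzw zwC.
have zV_zw : z ** cinv z = z ** w.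
  have zw_zV : z ** w ** (z ** cinv z) = z ** cinv z by rewrite -cmulA zwz.
  by rewrite -zw_zV zwC cmulVC cmulA -(cmulA z) cmulVK.
have -> : w = w ** (z ** w) by rewrite -cmulA wzw.
by rewrite -zV_zw -cmulA -zwC -zV_zw cmulVC cinv_mulVK.
Qed.

Lemma cinv_idem e : e ** e = e -> cinv e = e.
Proof. by move=> ee; symmetry; apply: cinv_unique; rewrite ?ee. Qed.

Definition in_H e h := e ** h = h /\ h ** e = h.

Section HClass.
Variable e : S.
Hypothesis e_idem : e ** e = e.

Lemma in_H_idem : in_H e e.
Proof. by []. Qed.

Lemma in_H_mul h1 h2 : in_H e h1 -> in_H e h2 -> in_H e (h1 ** h2).
Proof. by move=> [h1l h1r] [h2l h2r]; split; [rewrite -cmulA h1l | rewrite cmulA h2r]. Qed.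

Lemma in_H_sandwich x : in_H e (e ** x ** e).
Proof. by split; rewrite ?cmulA -?(cmulA e e) ?e_idem // -!cmulA e_idem. Qed.

Lemma in_H_Vmul h : in_H e h -> cinv h ** h = e.
Proof.
move=> [hl hr]; have := cinv_sandwich e h.
by rewrite hl hr (cinv_idem e_idem) e_idem.
Qed.

Lemma in_H_mulV h : in_H e h -> h ** cinv h = e.
Proof. by move=> hH; rewrite cmulVC in_H_Vmul. Qed.

Lemma in_H_inv h : in_H e h -> in_H e (cinv h).
Proof.
move=> hH; split.
- by rewrite -(in_H_Vmul hH) cinv_mulVK.
- by rewrite -(in_H_mulV hH) -cmulA cinv_mulVK.
Qed.

Lemma cmul_sandwichV x : x ** e ** cinv (e ** x ** e) ** e ** x = x.
Proof.
have uH := in_H_sandwich x.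
set u := e ** x ** e in uH *; set v := x ** e ** x.
have v_rest : v ** (e ** cinv u ** e ** x) = v.
  rewrite /v !cmulA -(cmulA e x) -(cmulA _ e) -/u -(cmulA u) (in_H_mulV uH).
  by rewrite -(cmulA e e) e_idem -!cmulA.
have x_vVv : x ** cinv v ** v = x by rewrite cmulA cinv_sandwich -cmulA cmulVK.
have -> : x ** e ** cinv u ** e ** x = x ** (e ** cinv u ** e ** x) by rewrite !cmulA.
by rewrite -{1}x_vVv (cmulA (x ** cinv v)) v_rest x_vVv.
Qed.

End HClass.
End CssTheory.

Record grp := Grp {
  grp_sort :> Type;
  gmul : grp_sort -> grp_sort -> grp_sort;
  ginv : grp_sort -> grp_sort;
  gone : grp_sort;
  gmulA : forall x y z, gmul (gmul x y) z = gmul x (gmul y z);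
  gmul1l : forall x, gmul gone x = x;
  gmul1r : forall x, gmul x gone = x;
  gmulVl : forall x, gmul (ginv x) x = gone;
  gmulVr : forall x, gmul x (ginv x) = gone }.
Arguments gmul {g}. Arguments ginv {g}. Arguments gone {g}.
Local Notation "x *g y" := (gmul x y) (at level 40, left associativity).

Section GroupTheory.
Variable G : grp.
Implicit Types x y z : G.

Lemma gmulKV x y : x *g (ginv x *g y) = y.
Proof. by rewrite -gmulA gmulVr gmul1l. Qed.

Lemma gmulVK x y : ginv x *g (x *g y) = y.
Proof. by rewrite -gmulA gmulVl gmul1l. Qed.

Lemma gmulIl x y z : x *g y = x *g z -> y = z.
Proof. by move=> xy_xz; rewrite -(gmulVK x y) xy_xz gmulVK. Qed.

Lemma gmulIr x y z : y *g x = z *g x -> y = z.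
Proof. by move=> yx_zx; rewrite -(gmul1r y) -(gmulVr x) -gmulA yx_zx gmulA gmulVr gmul1r. Qed.

Lemma ginvK x : ginv (ginv x) = x.
Proof. by apply: (@gmulIl (ginv x)); rewrite gmulVr gmulVl. Qed.

Lemma ginvM x y : ginv (x *g y) = ginv y *g ginv x.
Proof. by apply: (@gmulIl (x *g y)); rewrite gmulVr gmulA gmulKV gmulVr. Qed.

Lemma ginv1 : ginv (gone : G) = gone.
Proof. by apply: (@gmulIl gone); rewrite gmulVr gmul1l. Qed.

End GroupTheory.

Section Rees.
Variables (G : grp) (I L : Type) (P : L -> I -> G).

Inductive rees := Rees of I & G & L.

Definition rees_mul (x y : rees) : rees :=
  let: Rees i a l := x in let: Rees j b m := y in Rees i (a *g P l j *g b) m.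

(* The inverse of (i, a, l) in the group H_il, whose identity is (i, (P l i)^-1, l). *)
Definition rees_inv (x : rees) : rees :=
  let: Rees i a l := x in Rees i (ginv (P l i) *g ginv a *g ginv (P l i)) l.

Lemma rees_mulA x y z : rees_mul (rees_mul x y) z = rees_mul x (rees_mul y z).
Proof. by case: x => ???; case: y => ???; case: z => ???; rewrite /= !gmulA. Qed.

Lemma rees_mulV i a l : rees_mul (Rees i a l) (rees_inv (Rees i a l)) = Rees i (ginv (P l i)) l.
Proof. by rewrite /= !gmulA !gmulKV. Qed.

Lemma rees_Vmul i a l : rees_mul (rees_inv (Rees i a l)) (Rees i a l) = Rees i (ginv (P l i)) l.
Proof. by rewrite /= !gmulA gmulVK gmulVl gmul1r. Qed.

Lemma rees_mulVK x : rees_mul (rees_mul x (rees_inv x)) x = x.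
Proof. by case: x => i a l; rewrite rees_mulV /= gmulA gmulVK. Qed.

Lemma rees_mulVC x : rees_mul x (rees_inv x) = rees_mul (rees_inv x) x.
Proof. by case: x => i a l; rewrite rees_mulV rees_Vmul. Qed.

Lemma rees_invK x : rees_inv (rees_inv x) = x.
Proof. by case: x => i a l; rewrite /= !ginvM !ginvK !gmulA gmulVK gmulVr gmul1r. Qed.

Lemma rees_inv_sandwich x y :
  rees_mul (rees_inv (rees_mul (rees_mul x y) x)) (rees_mul (rees_mul x y) x)
  = rees_mul (rees_inv x) x.
Proof. by case: x => i a l; case: y => j b m; rewrite [rees_mul _ (Rees i a l)]/= !rees_Vmul. Qed.

Definition rees_css : css :=
  Css rees_mulA rees_mulVK rees_mulVC rees_invK rees_inv_sandwich.

End Rees.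

Section FreeGroup.
Variable T : eqType.
Notation letter := (T * bool)%type.
Notation word := (seq letter).
Implicit Types (a b c : letter) (s u v : word).

Definition lflip a : letter := (a.1, ~~ a.2).

Lemma lflipK : involutive lflip.
Proof. by case=> x b; rewrite /lflip /= negbK. Qed.

Lemma lflip_eq a b : (a == lflip b) = (b == lflip a).
Proof. by apply/eqP/eqP => ->; rewrite lflipK. Qed.

Definition reduce_cons a s : word :=
  if s is b :: s' then (if b == lflip a then s' else a :: s) else [:: a].

Fixpoint reduced s : bool :=
  if s is a :: s' then reduced s' && (if s' is b :: _ then b != lflip a else true)
  else true.

Definition reduce_cat u s : word := foldr reduce_cons s u.

Lemma reduced_reduce_cons a s : reduced s -> reduced (reduce_cons a s).
Proof.
case: s => [|b s] //= /andP [hs hb].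
by case: ifP => [_|/negbT hba] //=; rewrite hs hb hba.
Qed.

Lemma reduce_consK a s : reduced s -> reduce_cons (lflip a) (reduce_cons a s) = s.
Proof.
case: s => [|b s] /=; first by rewrite lflipK eqxx.
move=> /andP [_ hb]; case: ifP => [/eqP hba|_] /=.
- by case: s hb => [|c s] /=; rewrite hba ?lflipK // => /negbTE ->.
- by rewrite lflipK eqxx.
Qed.

Lemma reduced_reduce_cat u s : reduced s -> reduced (reduce_cat u s).
Proof. by move=> hs; elim: u => //= a u; apply: reduced_reduce_cons. Qed.

Lemma reduce_cat_cons a s v : reduced v ->
  reduce_cat (reduce_cons a s) v = reduce_cat (a :: s) v.
Proof.
move=> hv; case: s => [|b s] //=; case: ifP => [/eqP ->|] //=.
by rewrite -{1}(lflipK a) reduce_consK // reduced_reduce_cat.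
Qed.

Lemma reduce_catA u s v : reduced v ->
  reduce_cat (reduce_cat u s) v = reduce_cat u (reduce_cat s v).
Proof. by move=> hv; elim: u => //= a u IH; rewrite reduce_cat_cons //= IH. Qed.

Lemma reduce_cat0 s : reduced s -> reduce_cat s [::] = s.
Proof.
elim: s => //= a s IH /andP [hs ha]; rewrite IH //.
by case: s ha {hs IH} => //= b s /negbTE ->.
Qed.

Definition word_inv s : word := rev (map lflip s).

Lemma word_invK : involutive word_inv.
Proof.
by move=> s; rewrite /word_inv -map_rev revK -map_comp map_id_in // => a _ /=; rewrite lflipK.
Qed.

Lemma reduce_catV s v : reduced v -> reduce_cat (word_inv s) (reduce_cat s v) = v.
Proof.
move=> hv; elim: s => //= a s IH.
rewrite /word_inv map_cons rev_cons -cats1 /reduce_cat foldr_cat /=.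
by rewrite reduce_consK ?IH ?reduced_reduce_cat.
Qed.

Definition free_group := {s : word | reduced s}.

Definition fg_mul (x y : free_group) : free_group :=
  exist _ (reduce_cat (val x) (val y)) (reduced_reduce_cat (val x) (valP y)).
Definition fg_one : free_group := exist _ [::] isT.
Definition fg_inv (x : free_group) : free_group :=
  exist _ (reduce_cat (word_inv (val x)) [::]) (reduced_reduce_cat _ (isT : reduced [::])).

Lemma fg_mulA x y z : fg_mul (fg_mul x y) z = fg_mul x (fg_mul y z).
Proof. by apply: val_inj; rewrite /= reduce_catA //; apply: valP. Qed.

Lemma fg_mul1l x : fg_mul fg_one x = x.
Proof. exact: val_inj. Qed.

Lemma fg_mul1r x : fg_mul x fg_one = x.
Proof. by apply: val_inj; rewrite /= reduce_cat0 //; apply: valP. Qed.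

Lemma fg_mulVl x : fg_mul (fg_inv x) x = fg_one.
Proof.
apply: val_inj; have hx := valP x.
by rewrite /= reduce_catA // -{2}(reduce_cat0 hx) reduce_catV.
Qed.

Lemma fg_mulVr x : fg_mul x (fg_inv x) = fg_one.
Proof. by apply: val_inj; rewrite /= -[in reduce_cat (val x)](word_invK (val x)) reduce_catV. Qed.

Definition FG : grp := Grp fg_mulA fg_mul1l fg_mul1r fg_mulVl fg_mulVr.

Definition fg_letter a : FG := exist _ [:: a] isT.

Lemma cat_reduced a u s : reduced (a :: u) -> reduced s ->
  (if s is b :: _ then b != lflip (last a u) else true) -> reduced ((a :: u) ++ s).
Proof.
elim: u a => [|a' u IH] a.
- by move=> _; case: s => //= b s -> ->.
- by move=> /andP [hu ha] hs hj; apply/andP; split; [exact: IH | exact: ha].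
Qed.

Lemma fg_neq_mulV (x y : FG) : x <> y -> val (x *g ginv y) != [::].
Proof.
move=> xy; apply/eqP => xyV1; apply: xy; apply: (@gmulIr _ (ginv y)).
by rewrite gmulVr; apply: val_inj.
Qed.

Lemma fg_mul_reduced (x y : FG) : reduced (val x ++ val y) -> val (x *g y) = val x ++ val y.
Proof.
rewrite /=; elim: (val x) => //= a u IH /andP [us a_us]; rewrite IH //.
by case: (u ++ val y) a_us => //= b t /negbTE ->.
Qed.

Definition fg_conj c (y : FG) : FG := fg_letter c *g y *g ginv (fg_letter c).

(* Conjugating y by a letter c that cancels against neither end of x nor of y
   makes both products reduced words, and they start with different letters. *)
Lemma fg_conj_letter_noncomm (x y : FG) c d :
  val x != [::] -> val y != [::] ->
  c != head d (val x) -> c != lflip (last d (val x)) ->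
  c != lflip (head d (val y)) -> c != last d (val y) ->
  x *g fg_conj c y <> fg_conj c y *g x.
Proof.
case ex: (val x) => [|x0 xs] //; case ey: (val y) => [|y0 ys] //= _ _ cx0 cxl cy0 cyl.
have rx := valP x; have ry := valP y; rewrite ?ex ?ey in rx ry.
have cy : val (fg_letter c *g y) = [:: c, y0 & ys].
  by rewrite fg_mul_reduced ey //; apply: (@cat_reduced c [::]) => //=; rewrite lflip_eq.
have hz : val (fg_conj c y) = c :: rcons (y0 :: ys) (lflip c).
  rewrite -rcons_cons -cats1 fg_mul_reduced cy //.
  apply: cat_reduced => //; first by rewrite -cy valP.
  by rewrite /= (inj_eq (can_inj lflipK)).
have rz := valP (fg_conj c y); rewrite hz in rz.
have hxz : val (x *g fg_conj c y) = x0 :: xs ++ val (fg_conj c y).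
  by rewrite fg_mul_reduced ex // hz; apply: cat_reduced.
have hzx : val (fg_conj c y *g x) = val (fg_conj c y) ++ x0 :: xs.
  rewrite fg_mul_reduced ex // hz; apply: cat_reduced => //.
  by rewrite last_rcons lflipK eq_sym.
by move=> /(congr1 val); rewrite hxz hzx hz => -[x0c]; rewrite x0c eqxx in cx0.
Qed.

End FreeGroup.

Section TermQuotient.
Variable V : Type.
Implicit Types s t : css_term V.

(* F_css(V) as a type: css_eq-classes of terms, represented by their extension. *)
Definition term_class := {P : css_term V -> Prop | exists t, P = css_eq t}.

Definition cls t : term_class := exist _ (css_eq t) (ex_intro _ t erefl).

Definition repr (q : term_class) : css_term V :=
  proj1_sig (constructive_indefinite_description _ (proj2_sig q)).

Lemma term_class_ext (p q : term_class) : sval p = sval q -> p = q.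
Proof. by case: p q => P hP [Q hQ] /= PQ; subst Q; congr exist; apply: proof_irrelevance. Qed.

Lemma cls_eq s t : cls s = cls t <-> css_eq s t.
Proof.
split=> st.
  by have /= -> := f_equal (fun q : term_class => proj1_sig q t) st; apply: css_refl.
apply: term_class_ext; apply: functional_extensionality => u.
apply: propositional_extensionality.
by split; [apply: css_trans (css_sym st) | apply: css_trans st].
Qed.

Lemma reprK : cancel repr cls.
Proof.
move=> q; apply: term_class_ext; rewrite /repr.
by case: constructive_indefinite_description.
Qed.

Lemma repr_cls t : css_eq (repr (cls t)) t.
Proof. by apply/cls_eq; rewrite reprK. Qed.

Definition cls_mul (p q : term_class) := cls (Mul (repr p) (repr q)).
Definition cls_inv (p : term_class) := cls (Inv (repr p)).

Lemma cls_mulE s t : cls_mul (cls s) (cls t) = cls (Mul s t).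
Proof. by apply/cls_eq; apply: css_cong_mul; apply: repr_cls. Qed.

Lemma cls_invE s : cls_inv (cls s) = cls (Inv s).
Proof. by apply/cls_eq; apply: css_cong_inv; apply: repr_cls. Qed.

Lemma cls_mulA x y z : cls_mul (cls_mul x y) z = cls_mul x (cls_mul y z).
Proof.
by rewrite -(reprK x) -(reprK y) -(reprK z) !cls_mulE; apply/cls_eq/css_assoc.
Qed.

Lemma cls_mulVK x : cls_mul (cls_mul x (cls_inv x)) x = x.
Proof. by rewrite -(reprK x) cls_invE !cls_mulE; apply/cls_eq/css_ax1. Qed.

Lemma cls_mulVC x : cls_mul x (cls_inv x) = cls_mul (cls_inv x) x.
Proof. by rewrite -(reprK x) cls_invE !cls_mulE; apply/cls_eq/css_ax2. Qed.

Lemma cls_invK x : cls_inv (cls_inv x) = x.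
Proof. by rewrite -(reprK x) !cls_invE; apply/cls_eq/css_ax3. Qed.

Lemma cls_inv_sandwich x y :
  cls_mul (cls_inv (cls_mul (cls_mul x y) x)) (cls_mul (cls_mul x y) x) = cls_mul (cls_inv x) x.
Proof. by rewrite -(reprK x) -(reprK y) !(cls_mulE, cls_invE); apply/cls_eq/css_ax4. Qed.

Definition term_css : css :=
  Css cls_mulA cls_mulVK cls_mulVC cls_invK cls_inv_sandwich.

Lemma eval_cls t : eval (S := term_css) (fun v => cls (Var v)) t = cls t.
Proof.
elim: t => //= [a IHa b IHb | a IHa]; first by rewrite IHa IHb; apply: cls_mulE.
by rewrite IHa; apply: cls_invE.
Qed.

End TermQuotient.

Section FreeModel.
Variable n : nat.
Notation idx := 'I_n.+1.

(* Generators of the structure group: inl i stands for the paper's x_i and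
   inr (l, i) for the sandwich entry p_li, which is trivial in row or column 0. *)
Definition gen := (idx + idx * idx)%type.

Definition gen_elt (g : gen) : FG gen := fg_letter (g, true).

Definition sandwich (l i : idx) : FG gen :=
  if (l == ord0) || (i == ord0) then gone else gen_elt (inr (l, i)).

Definition model : css := rees_css sandwich.

Definition model_gen (i : idx) : model := Rees i (gen_elt (inl i)) i.

Definition interp (t : css_term idx) : model := eval model_gen t.

Definition idem_term : css_term idx := Mul (Var ord0) (Inv (Var ord0)).
Definition core_term i : css_term idx := Mul (Mul idem_term (Var i)) idem_term.
Definition row_term i : css_term idx := Mul (Mul (Var i) idem_term) (Inv (core_term i)).
Definition col_term l : css_term idx := Mul (Mul (Inv (core_term l)) idem_term) (Var l).

Section UniversalProperty.
Variables (S : css) (xs : idx -> S).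
Local Notation ev := (eval xs).
Local Notation e := (ev idem_term).
Local Arguments eval : simpl never.

Definition gen_val (g : gen) : S :=
  match g with inl i => ev (core_term i) | inr (l, i) => ev (col_term l) ** ev (row_term i) end.

Definition letter_val (a : gen * bool) : S :=
  let: (g, b) := a in if b then gen_val g else cinv (gen_val g).

Definition word_val (w : seq (gen * bool)) : S :=
  foldr (fun a acc => letter_val a ** acc) e w.

Definition model_hom (x : model) : S :=
  let: Rees i g l := x in ev (row_term i) ** word_val (val g) ** ev (col_term l).

Lemma idem_term_idem : e ** e = e.
Proof. exact: idem_mulV. Qed.

Lemma in_H_core i : in_H e (ev (core_term i)).
Proof. exact: in_H_sandwich idem_term_idem _. Qed.

Lemma idem_termE : e = xs ord0 ** cinv (xs ord0).
Proof. by []. Qed.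

Lemma core_termE i : ev (core_term i) = e ** xs i ** e.
Proof. by []. Qed.

Lemma col_termE l : ev (col_term l) = cinv (ev (core_term l)) ** e ** xs l.
Proof. by []. Qed.

Lemma row_termE i : ev (row_term i) = xs i ** e ** cinv (ev (core_term i)).
Proof. by []. Qed.

Lemma idem_mul_col l : e ** ev (col_term l) = ev (col_term l).
Proof. by rewrite col_termE -!cmulA (proj1 (in_H_inv idem_term_idem (in_H_core l))). Qed.

Lemma row_mul_idem i : ev (row_term i) ** e = ev (row_term i).
Proof. by rewrite row_termE cmulA (proj2 (in_H_inv idem_term_idem (in_H_core i))). Qed.

Lemma in_H_gen g : in_H e (gen_val g).
Proof.
case: g => [i|[l i]]; first exact: in_H_core.
by split; [rewrite -cmulA idem_mul_col | rewrite cmulA row_mul_idem].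
Qed.

Lemma in_H_letter a : in_H e (letter_val a).
Proof. by case: a => g []; [|apply: (in_H_inv idem_term_idem)]; apply: in_H_gen. Qed.

Lemma in_H_word w : in_H e (word_val w).
Proof.
elim: w => [|a w IH] /=; first exact: in_H_idem idem_term_idem.
exact: in_H_mul (in_H_letter a) IH.
Qed.

Lemma letter_val_flip a : letter_val a ** letter_val (lflip a) = e.
Proof.
case: a => g [] /=.
- by apply: (in_H_mulV idem_term_idem); apply: in_H_gen.
- by apply: (in_H_Vmul idem_term_idem); apply: in_H_gen.
Qed.

Lemma word_val_reduce_cons a s : word_val (reduce_cons a s) = letter_val a ** word_val s.
Proof.
case: s => [|b s] //=; case: ifP => [/eqP ->|] //=.
by rewrite -cmulA letter_val_flip (proj1 (in_H_word s)).
Qed.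

Lemma word_val_reduce_cat u s : word_val (reduce_cat u s) = word_val u ** word_val s.
Proof.
elim: u => [|a u IH] /=; first by rewrite (proj1 (in_H_word s)).
by rewrite word_val_reduce_cons IH cmulA.
Qed.

Lemma core_term0 : ev (core_term ord0) = xs ord0.
Proof. by rewrite core_termE idem_termE cmulVK cmul_mulV. Qed.

Lemma col_term0 : ev (col_term ord0) = e.
Proof. by rewrite col_termE core_term0 idem_termE -cmulA cinv_mulVK cmulVC. Qed.

Lemma row_term0 : ev (row_term ord0) = e.
Proof. by rewrite row_termE core_term0 idem_termE cmul_mulV. Qed.

Lemma word_val_sandwich l i : word_val (val (sandwich l i)) = ev (col_term l) ** ev (row_term i).
Proof.
rewrite /sandwich; case: ifP => [/orP [] /eqP -> | _].
- rewrite -[word_val _]/e col_term0 -{1}(in_H_mulV idem_term_idem (in_H_core i)).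
  by rewrite row_termE core_termE !cmulA.
- rewrite -[word_val _]/e row_term0 -{1}(in_H_Vmul idem_term_idem (in_H_core l)).
  by rewrite col_termE core_termE !cmulA.
- exact: (proj2 (in_H_gen (inr (l, i)))).
Qed.

Lemma model_hom_mul x y : model_hom (x ** y) = model_hom x ** model_hom y.
Proof.
case: x => i a l; case: y => j b m /=.
by rewrite !word_val_reduce_cat word_val_sandwich !cmulA.
Qed.

Lemma model_hom_gen i : model_hom (model_gen i) = xs i.
Proof.
rewrite /= (proj2 (in_H_core i)) row_termE col_termE.
set u := ev (core_term i).
have -> : xs i ** e ** cinv u ** u ** (cinv u ** e ** xs i)
          = xs i ** e ** (cinv u ** u ** cinv u) ** e ** xs i by rewrite !cmulA.
by rewrite cinv_mulVK; apply: (cmul_sandwichV idem_term_idem).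
Qed.

Lemma model_hom_inv x : model_hom (cinv x) = cinv (model_hom x).
Proof. by apply: cinv_unique; rewrite -!model_hom_mul ?cmulVK ?cinv_mulVK ?cmulVC. Qed.

Lemma model_hom_interp t : model_hom (interp t) = ev t.
Proof.
elim: t => [i|a IHa b IHb|a IHa] /=; first exact: model_hom_gen.
- by rewrite model_hom_mul IHa IHb.
- by rewrite model_hom_inv IHa.
Qed.

End UniversalProperty.

Lemma interp_complete s t : interp s = interp t -> css_eq s t.
Proof.
move=> st; apply/cls_eq.
by rewrite -!eval_cls -!(model_hom_interp (S := term_css idx)) st.
Qed.

Lemma interp_mul s t : interp (Mul s t) = interp s ** interp t.
Proof. by []. Qed.

Lemma interp_inv t : interp (Inv t) = cinv (interp t).
Proof. by []. Qed.

Definition hcore (a : FG gen) : model := Rees ord0 a ord0.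

Lemma sandwich0l i : sandwich ord0 i = gone.
Proof. by rewrite /sandwich eqxx. Qed.

Lemma sandwich0r l : sandwich l ord0 = gone.
Proof. by rewrite /sandwich eqxx orbT. Qed.

Lemma rees_mulE i a l j b m :
  (Rees i a l : model) ** Rees j b m = Rees i (a *g sandwich l j *g b) m.
Proof. by []. Qed.

Lemma rees_invE i a l :
  cinv (Rees i a l : model) = Rees i (ginv (sandwich l i) *g ginv a *g ginv (sandwich l i)) l.
Proof. by []. Qed.

Lemma hcore_mul a b : hcore a ** hcore b = hcore (a *g b).
Proof. by rewrite rees_mulE sandwich0l gmul1r. Qed.

Lemma hcore_inv a : cinv (hcore a) = hcore (ginv a).
Proof. by rewrite rees_invE sandwich0l ginv1 gmul1l gmul1r. Qed.

Lemma hcore_inj : injective hcore.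
Proof. by move=> a b []. Qed.

Lemma interp_idem : interp idem_term = hcore gone.
Proof.
rewrite -[interp _]/(model_gen ord0 ** cinv (model_gen ord0)) rees_invE rees_mulE.
by rewrite sandwich0l ginv1 !gmul1r gmul1l gmulVr.
Qed.

Lemma interp_core i : interp (core_term i) = hcore (gen_elt (inl i)).
Proof.
rewrite -[interp _]/(interp idem_term ** model_gen i ** interp idem_term) interp_idem.
by rewrite !rees_mulE sandwich0l sandwich0r !gmul1l !gmul1r.
Qed.

Lemma interp_row i : interp (row_term i) = Rees i gone ord0.
Proof.
rewrite -[interp _]/(model_gen i ** interp idem_term ** cinv (interp (core_term i))).
by rewrite interp_idem interp_core hcore_inv !rees_mulE !sandwich0r !gmul1r gmulVr.
Qed.

Lemma interp_col l : interp (col_term l) = Rees ord0 gone l.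
Proof.
rewrite -[interp _]/(cinv (interp (core_term l)) ** interp idem_term ** model_gen l).
by rewrite interp_idem interp_core hcore_inv !rees_mulE !sandwich0l !gmul1r gmulVl.
Qed.

End FreeModel.

Section Gadget.
Variable n : nat.
Local Notation idx := 'I_n.+2.
Local Notation term := (css_term idx).
Local Notation FGn := (FG (gen n.+1)).
Local Notation model := (model n.+1).

Definition idx1 : idx := @Ordinal n.+2 1 isT.

(* Three ways of projecting x = (i, a, l) into the H-class of the identity:
   e x e, e x D_1 and C_1 x e, with values a, a p_l1 and p_1i a. *)
Inductive probe := PCore | PCol | PRow.

Definition probe_terms (k : probe) : term * term :=
  match k with
  | PCore => (idem_term n.+1, idem_term n.+1)
  | PCol => (idem_term n.+1, row_term idx1)
  | PRow => (col_term idx1, idem_term n.+1)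
  end.

Definition coord (k : probe) (x : model) : FGn :=
  let: Rees i a l := x in
  match k with PCore => a | PCol => a *g sandwich l idx1 | PRow => sandwich idx1 i *g a end.

Section GadgetTerms.
Variables (W : Type) (cst : term -> css_term W).

Definition probe_term k (t : css_term W) : css_term W :=
  Mul (Mul (cst (probe_terms k).1) t) (cst (probe_terms k).2).

Definition diff_term k (a b : css_term W) : css_term W :=
  Mul (probe_term k a) (Inv (probe_term k b)).

Definition conj_term (g : term) (t : css_term W) : css_term W :=
  Mul (Mul (probe_term PCore (cst g)) t) (Inv (probe_term PCore (cst g))).

Definition gadget k l g (a b c d : css_term W) : css_term W * css_term W :=
  let X := diff_term k a b in
  let Z := conj_term g (diff_term l c d) in
  (Mul X Z, Mul Z X).

End GadgetTerms.

Lemma interp_probe k t : interp (probe_term id k t) = hcore (coord k (interp t)).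
Proof.
rewrite 2!interp_mul; case: (interp t) => i a l.
case: k; cbn [probe_terms fst snd]; rewrite ?interp_idem ?interp_row ?interp_col !rees_mulE.
all: by rewrite ?sandwich0l ?sandwich0r ?(gmul1l, gmul1r).
Qed.

Lemma idx1_neq0 : (idx1 == ord0) = false.
Proof. by []. Qed.

Lemma sandwich_injl l l' : sandwich l idx1 = sandwich l' idx1 -> l = l'.
Proof.
rewrite /sandwich idx1_neq0 !orbF.
by case: eqP => [->|_]; case: eqP => [->|_] // /(congr1 val) [].
Qed.

Lemma sandwich_injr i i' : sandwich idx1 i = sandwich idx1 i' -> i = i'.
Proof.
rewrite /sandwich idx1_neq0.
by case: eqP => [->|_]; case: eqP => [->|_] // /(congr1 val) [].
Qed.

Lemma coord_inj x y : (forall k, coord k x = coord k y) -> x = y.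
Proof.
case: x => i a l; case: y => j b m hxy.
have ab : a = b := hxy PCore.
have := hxy PCol; have := hxy PRow; cbn [coord]; rewrite ab.
by move=> /gmulIr /sandwich_injr -> /gmulIl /sandwich_injl ->.
Qed.

Lemma coord_separates x y : x <> y -> exists k, coord k x <> coord k y.
Proof.
move=> xy; apply: NNPP => nk; apply: xy; apply: coord_inj => k.
by apply: NNPP => ne; apply: nk; exists k.
Qed.


Definition gadget_val (k l : probe) (g a b c d : model) : FGn * FGn :=
  let X := coord k a *g ginv (coord k b) in
  let G := coord PCore g in
  let Z := G *g (coord l c *g ginv (coord l d)) *g ginv G in
  (X *g Z, Z *g X).

Lemma interp_diff k a b :
  interp (diff_term id k a b) = hcore (coord k (interp a) *g ginv (coord k (interp b))).
Proof. by rewrite interp_mul interp_inv !interp_probe hcore_inv hcore_mul. Qed.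

Lemma interp_conj g t :
  interp (conj_term id g t)
  = hcore (coord PCore (interp g)) ** interp t ** hcore (ginv (coord PCore (interp g))).
Proof. by rewrite 2!interp_mul interp_inv interp_probe hcore_inv. Qed.

Lemma interp_gadget k l g a b c d :
  let v := gadget_val k l (interp g) (interp a) (interp b) (interp c) (interp d) in
  interp (gadget id k l g a b c d).1 = hcore v.1 /\
  interp (gadget id k l g a b c d).2 = hcore v.2.
Proof. by split; rewrite interp_mul interp_conj !interp_diff !hcore_mul. Qed.

Lemma gadget_css_eqP k l g a b c d :
  css_eq (gadget id k l g a b c d).1 (gadget id k l g a b c d).2 <->
  (gadget_val k l (interp g) (interp a) (interp b) (interp c) (interp d)).1 =
  (gadget_val k l (interp g) (interp a) (interp b) (interp c) (interp d)).2.
Proof.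
have [E1 E2] := interp_gadget k l g a b c d.
split=> [/(eval_css_eq (model_gen (n:=n.+1))) | v12].
  by rewrite -/(interp _) -/(interp _) E1 E2 => /hcore_inj.
by apply: interp_complete; rewrite E1 E2 v12.
Qed.

Lemma gadget_css_eq_left k l g a b c d :
  css_eq a b -> css_eq (gadget id k l g a b c d).1 (gadget id k l g a b c d).2.
Proof.
move=> ab_eq; have ab : interp a = interp b by apply: eval_css_eq.
by apply/gadget_css_eqP; cbn [gadget_val fst snd]; rewrite ab gmulVr gmul1l gmul1r.
Qed.

Lemma gadget_css_eq_right k l g a b c d :
  css_eq c d -> css_eq (gadget id k l g a b c d).1 (gadget id k l g a b c d).2.
Proof.
move=> cd_eq; have cd : interp c = interp d by apply: eval_css_eq.
by apply/gadget_css_eqP; cbn [gadget_val fst snd]; rewrite cd gmulVr gmul1r gmulVr gmul1l gmul1r.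
Qed.

(* Letters of the free group that are values of terms: x_i^{+-1}, and p_li^{+-1}
   for l, i <> 0 (the entries p_0i and p_l0 are trivial). *)
Definition named_gen (g : gen n.+1) : bool :=
  if g is inr (l, i) then (l != ord0) && (i != ord0) else true.

Definition gen_term (g : gen n.+1) : term :=
  match g with inl i => core_term i | inr (l, i) => Mul (col_term l) (row_term i) end.

Definition letter_term (c : gen n.+1 * bool) : term :=
  let: (g, b) := c in if b then gen_term g else Inv (gen_term g).

Lemma interp_gen_term g : named_gen g -> interp (gen_term g) = hcore (gen_elt g).
Proof.
case: g => [i _|[l i] /andP [/negbTE l0 /negbTE i0]]; first exact: interp_core.
by rewrite interp_mul interp_col interp_row rees_mulE /sandwich l0 i0 gmul1l gmul1r.
Qed.

Lemma interp_letter_term c : named_gen c.1 -> interp (letter_term c) = hcore (fg_letter c).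
Proof.
case: c => g [] /= /interp_gen_term gE; first exact: gE.
by rewrite interp_inv gE hcore_inv; congr hcore; apply: val_inj.
Qed.

Definition candidate_letters : seq (gen n.+1 * bool) :=
  [:: (inl ord0, true); (inl ord0, false); (inl idx1, true); (inl idx1, false);
      (inr (idx1, idx1), true); (inr (idx1, idx1), false)].

Lemma exists_fresh_letter (s : seq (gen n.+1 * bool)) : size s <= 4 ->
  exists2 c, named_gen c.1 & c \notin s.
Proof.
move=> s4; have [/allP sub | ] := boolP (all (mem s) candidate_letters).
  by have := leq_trans (uniq_leq_size (isT : uniq candidate_letters) sub) s4.
rewrite -has_predC => /hasP [c cC cs]; exists c => //.
exact: (allP (isT : all (fun c => named_gen c.1) candidate_letters)).
Qed.

Lemma gadget_separates a b c d : ~ css_eq a b -> ~ css_eq c d ->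
  exists k l g, ~ css_eq (gadget id k l g a b c d).1 (gadget id k l g a b c d).2.
Proof.
move=> ab cd.
have [k abk] := coord_separates (fun e => ab (interp_complete e)).
have [l cdl] := coord_separates (fun e => cd (interp_complete e)).
set X := coord k (interp a) *g ginv (coord k (interp b)).
set Y := coord l (interp c) *g ginv (coord l (interp d)).
pose d0 : gen n.+1 * bool := (inl ord0, true).
have [z named fresh] := @exists_fresh_letter [:: head d0 (val X); lflip (last d0 (val X));
   lflip (head d0 (val Y)); last d0 (val Y)] isT.
exists k, l, (letter_term z); move/gadget_css_eqP; cbn [gadget_val fst snd].
rewrite interp_letter_term // -/X -/Y.
move: fresh; rewrite !inE => /norP [zX0 /norP [zX1 /norP [zY0 zY1]]].
exact: (fg_conj_letter_noncomm (fg_neq_mulV abk) (fg_neq_mulV cdl) zX0 zX1 zY0 zY1).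
Qed.

Section Union.
Variable m : nat.
Implicit Types (E : system n.+2 m) (p : 'I_m -> Fcss n.+2).

Definition LS_const (t : term) : LS_term n.+2 m := Var (inr t).

Lemma LS_eval_gadget p k l g (a b c d : LS_term n.+2 m) :
  let u := gadget id k l g (LS_eval p a) (LS_eval p b) (LS_eval p c) (LS_eval p d) in
  LS_eval p (gadget LS_const k l g a b c d).1 = u.1 /\
  LS_eval p (gadget LS_const k l g a b c d).2 = u.2.
Proof. by []. Qed.

Definition union_system E1 E2 : system n.+2 m :=
  fun e => exists e1 e2 k l g,
    [/\ E1 e1, E2 e2 & e = gadget LS_const k l g e1.1 e1.2 e2.1 e2.2].

Lemma not_solution E p :
  ~ solution E p -> exists2 e, E e & ~ css_eq (LS_eval p e.1) (LS_eval p e.2).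
Proof.
move=> nsol; apply: NNPP => nex; apply: nsol => e Ee.
by apply: NNPP => ne; apply: nex; exists e.
Qed.

Lemma solution_union_system E1 E2 p :
  solution (union_system E1 E2) p <-> solution E1 p \/ solution E2 p.
Proof.
split=> [sol | sol12 _ [e1 [e2 [k [l [g [E1e1 E2e2 ->]]]]]]]; last first.
  have [-> ->] := LS_eval_gadget p k l g e1.1 e1.2 e2.1 e2.2.
  case: sol12 => sol; first exact: gadget_css_eq_left (sol _ E1e1).
  exact: gadget_css_eq_right (sol _ E2e2).
apply: NNPP => /not_or_and [/not_solution [e1 E1e1 ne1] /not_solution [e2 E2e2 ne2]].
have [k [l [g nsep]]] := gadget_separates ne1 ne2; apply: nsep.
have [<- <-] := LS_eval_gadget p k l g e1.1 e1.2 e2.1 e2.2.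
by apply: sol; exists e1, e2, k, l, g.
Qed.

Lemma algebraic_solution E : algebraic (solution E).
Proof. by exists E. Qed.

Lemma algebraic_ext (A B : ('I_m -> Fcss n.+2) -> Prop) :
  (forall p, A p <-> B p) -> algebraic A -> algebraic B.
Proof. by move=> AB [E AE]; exists E => p; rewrite -AB. Qed.

Lemma algebraic_or (A B : ('I_m -> Fcss n.+2) -> Prop) :
  algebraic A -> algebraic B -> algebraic (fun p => A p \/ B p).
Proof.
case=> [E1 AE1] [E2 BE2]; exists (union_system E1 E2) => p.
by rewrite solution_union_system AE1 BE2.
Qed.

Lemma algebraic_empty : algebraic (fun _ : 'I_m -> Fcss n.+2 => False).
Proof.
exists (fun e => e = (LS_const (Var ord0), LS_const (Var idx1))) => p; split=> // sol.
by have /(eval_css_eq (model_gen (n:=n.+1))) [] := sol _ erefl.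
Qed.

Lemma algebraic_finite_union k (Es : 'I_k -> system n.+2 m) :
  algebraic (fun p => exists j, solution (Es j) p).
Proof.
elim: k Es => [|k IH] Es.
  by apply: algebraic_ext algebraic_empty => p; split=> // -[[]].
apply: algebraic_ext (algebraic_or (IH (fun j => Es (widen_ord (leqnSn k) j)))
                                   (algebraic_solution (Es ord_max))) => p.
split=> [[[j sol] | sol] | [j sol]]; first by exists (widen_ord (leqnSn k) j).
  by exists ord_max.
have [jk | kj] := ltnP j k.
  by left; exists (Ordinal jk); congr (solution (Es _) p): sol; apply: val_inj.
right; congr (solution (Es _) p): sol; apply: val_inj => /=.
by apply/eqP; rewrite eqn_leq kj -ltnS ltn_ord.
Qed.

End Union.
End Gadget.

Theorem mainTheorem8 (n : nat) : 2 <= n -> equational_domain n.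
Proof. by case: n => [|[|n]] // _ m k Es; apply: algebraic_finite_union. Qed.
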